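(* Let $(G,\sigma)$ be a connection graph with vertex set $V$, and let $H\subsetneq V$ be a nonempty proper subset. Suppose $f:V\to\mathbb{R}^{d\times d}$ is harmonic on $H$, i.e. $(\mathcal{L}f)(i)=\sum_{j\sim i}w_{ij}(f(i)-\sigma_{ij}f(j))=0_{d\times d}$ for every $i\in H$. Let $\|\cdot\|$ be any orthogonally invariant matrix norm on $\mathbb{R}^{d\times d}$. Then $$\max_{i\in\overline{H}}\|f(i)\|=\max_{i\in\partial H}\|f(i)\|.$$
   Context: A connection graph $(G,\sigma)$ consists of a finite connected weighted graph $G=(V,E,W)$ (weights $w_{ij}>0$ iff $\{i,j\}\in E$, no loops or multiple edges) and a map $\sigma$ from oriented edges to $\mathsf{O}(d)$ with $\sigma_{ji}=\sigma_{ij}^{\mathrm T}$. The vertex boundary is $\partial H=\{j\in V\setminus H:\ j\sim i\text{ for some }i\in H\}$ and $\overline{H}=H\cup\partial H$. *)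

From mathcomp Require Import all_boot all_order all_algebra.
Set Implicit Arguments. Unset Strict Implicit. Unset Printing Implicit Defensive.
Import Order.TTheory GRing.Theory Num.Theory.
Local Open Scope ring_scope.

Definition orthogonal_mx (R : realFieldType) (d : nat) (U : 'M[R]_d) : Prop :=
  U *m U^T = 1%:M.

Definition adj (R : realFieldType) (V : finType) (w : V -> V -> R) : rel V :=
  fun i j => 0 < w i j.

Definition connection_graph (R : realFieldType) (V : finType) (d : nat)
    (w : V -> V -> R) (sigma : V -> V -> 'M[R]_d) : Prop :=
  (forall i j, w i j = w j i) /\
  (forall i j, 0 <= w i j) /\
  (forall i, w i i = 0) /\
  (forall i j, connect (adj w) i j) /\
  (forall i j, adj w i j -> orthogonal_mx (sigma i j)) /\
  (forall i j, adj w i j -> sigma j i = (sigma i j)^T).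

Definition vboundary (R : realFieldType) (V : finType) (w : V -> V -> R)
    (H : {set V}) : {set V} :=
  [set j | (j \notin H) && [exists i, (i \in H) && adj w j i]].

Definition vclosure (R : realFieldType) (V : finType) (w : V -> V -> R)
    (H : {set V}) : {set V} := H :|: vboundary w H.

Definition conn_laplacian (R : realFieldType) (V : finType) (d : nat)
    (w : V -> V -> R) (sigma : V -> V -> 'M[R]_d) (f : V -> 'M[R]_d) (i : V)
    : 'M[R]_d :=
  \sum_(j | adj w i j) w i j *: (f i - sigma i j *m f j).

Definition matrix_norm (R : realFieldType) (d : nat) (N : 'M[R]_d -> R) : Prop :=
  [/\ (forall A, 0 <= N A),
      (forall A, N A = 0 -> A = 0),
      (forall (c : R) A, N (c *: A) = `|c| * N A) &
      (forall A B, N (A + B) <= N A + N B)].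

Definition orth_invariant (R : realFieldType) (d : nat) (N : 'M[R]_d -> R) : Prop :=
  forall U W A, orthogonal_mx U -> orthogonal_mx W -> N (U *m A *m W) = N A.

(* Maximum of a nonnegative function over a finite set (0 if empty). *)
Definition setmax (R : realFieldType) (V : finType) (S : {set V}) (F : V -> R) : R :=
  \big[Num.max/0]_(i in S) F i.

From mathcomp Require Import all_boot all_order all_algebra.
Set Implicit Arguments. Unset Strict Implicit. Unset Printing Implicit Defensive.
Import Order.TTheory GRing.Theory Num.Theory.
Local Open Scope ring_scope.

(* Harmonicity at i says that f(i) is the weighted mean of the sigma_ij f(j);
   since the sigma_ij are orthogonal and N is orthogonally invariant, the
   triangle inequality makes i |-> N (f i) subharmonic on H.  A subharmonic
   function on a connected graph that reached on H a value strictly above its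
   values on the boundary would have to be constant along a path from its
   maximiser out of H, and so would attain that value on the boundary. *)

Section MatrixNorm.
Variables (R : realFieldType) (d : nat) (N : 'M[R]_d -> R).
Hypothesis normN : matrix_norm N.

Lemma matrix_norm0 : N 0 = 0.
Proof. by case: normN => _ _ NZ _; rewrite -(scale0r 0) NZ normr0 mul0r. Qed.

Lemma matrix_norm_sum (I : finType) (P : pred I) (F : I -> 'M[R]_d) :
  N (\sum_(i | P i) F i) <= \sum_(i | P i) N (F i).
Proof.
case: normN => _ _ _ ND; elim/big_ind2: _ => [|A a B b ? ?|//].
  by rewrite matrix_norm0.
by apply: le_trans (ND _ _) _; exact: lerD.
Qed.

Lemma orth_invariant_mull U A :
  orth_invariant N -> orthogonal_mx U -> N (U *m A) = N A.
Proof.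
move=> invN orthU; rewrite -[U *m A]mulmx1 invN //.
by rewrite /orthogonal_mx trmx1 mulmx1.
Qed.

End MatrixNorm.

Lemma weighted_sum_ge_bound_eq (R : realDomainType) (I : finType) (P : pred I)
    (c g : I -> R) (M : R) :
  (forall j, P j -> 0 < c j) -> (forall j, P j -> g j <= M) ->
  (\sum_(j | P j) c j) * M <= \sum_(j | P j) c j * g j ->
  forall j, P j -> g j = M.
Proof.
move=> c_gt0 g_leM sum_ge j Pj.
have gap_ge0 k : P k -> 0 <= c k * (M - g k).
  by move=> Pk; rewrite mulr_ge0 ?subr_ge0 ?g_leM ?ltW ?c_gt0.
have gap0 : \sum_(k | P k) c k * (M - g k) = 0.
  apply/eqP; rewrite eq_le sumr_ge0 // andbT.
  under eq_bigr do rewrite mulrBr.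
  by rewrite sumrB -mulr_suml subr_le0.
move: (psumr_eq0P gap_ge0 gap0) => /(_ j Pj)/eqP.
by rewrite mulf_eq0 gt_eqF ?c_gt0 //= subr_eq0 => /eqP.
Qed.

Lemma connect_exit (T : finType) (e : rel T) (A : {set T}) (Q : pred T) x v :
  (forall y z, y \in A -> Q y -> e y z -> Q z) ->
  x \in A -> Q x -> connect e x v -> v \notin A ->
  exists y z, [/\ y \in A, z \notin A, e y z & Q z].
Proof.
move=> Q_closed xA Qx /connectP[p + ->]; elim: p x xA Qx => [|y p IH] x xA Qx /=.
  by move=> _ /negP.
case/andP=> exy pth; have Qy := Q_closed x y xA Qx exy.
case: (boolP (y \in A)) => yA; first exact: IH pth.
by exists x, y.
Qed.

Section MaximumPrinciple.
Variables (R : realFieldType) (V : finType) (w : V -> V -> R).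

Definition subharmonic_on (H : {set V}) (g : V -> R) : Prop :=
  forall i, i \in H ->
    (\sum_(j | adj w i j) w i j) * g i <= \sum_(j | adj w i j) w i j * g j.

Hypothesis w_sym : forall i j, w i j = w j i.

Lemma mem_vboundary (H : {set V}) i j :
  i \in H -> j \notin H -> adj w i j -> j \in vboundary w H.
Proof.
move=> iH jH aij; rewrite inE jH; apply/existsP; exists i.
by rewrite iH /adj w_sym.
Qed.

Lemma mem_vclosure_adj (H : {set V}) i j :
  i \in H -> adj w i j -> j \in vclosure w H.
Proof.
move=> iH aij; rewrite inE; case: (boolP (j \in H)) => //= jH.
exact: mem_vboundary aij.
Qed.

Hypothesis w_connected : forall i j, connect (adj w) i j.

Lemma subharmonic_max_principle (H : {set V}) (g : V -> R) :
  H != [set: V] -> subharmonic_on H g ->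
  forall i, i \in H -> exists2 b, b \in vboundary w H & g i <= g b.
Proof.
move=> HnT subh i iH.
case: (boolP [exists b in vboundary w H, g i <= g b]) => [/exists_inP//|].
rewrite negb_exists_in => /forall_inP bd_lt.
have {}bd_lt b : b \in vboundary w H -> g b < g i by rewrite ltNge; exact: bd_lt.
case: (arg_maxP g iH) => x xH x_max.
have le_closure j : j \in vclosure w H -> g j <= g x.
  rewrite inE => /orP[/x_max//|jb].
  exact: ltW (lt_le_trans (bd_lt j jb) (x_max i iH)).
have max_spreads y z : y \in H -> g y == g x -> adj w y z -> g z == g x.
  move=> yH /eqP gyx ayz; apply/eqP.
  apply: (weighted_sum_ge_bound_eq (P := adj w y) (c := w y)) ayz => // [j|].
    by move/(mem_vclosure_adj yH); exact: le_closure.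
  by rewrite -gyx; exact: subh.
have /properP[_ [v _ vH]] : H \proper [set: V] by rewrite properT.
have [y [z [yH zH ayz /eqP gzx]]] :=
  connect_exit max_spreads xH (eqxx _) (w_connected x v) vH.
have := bd_lt z (mem_vboundary yH zH ayz).
by rewrite gzx => /lt_le_trans/(_ (x_max i iH)); rewrite ltxx.
Qed.

End MaximumPrinciple.

Lemma harmonic_norm_subharmonic (R : realFieldType) (V : finType) (d : nat)
    (w : V -> V -> R) (sigma : V -> V -> 'M[R]_d) (H : {set V})
    (f : V -> 'M[R]_d) (N : 'M[R]_d -> R) :
  matrix_norm N -> orth_invariant N ->
  (forall i j, adj w i j -> orthogonal_mx (sigma i j)) ->
  (forall i, i \in H -> conn_laplacian w sigma f i = 0) ->
  subharmonic_on w H (fun i => N (f i)).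
Proof.
move=> normN invN orth harm i iH; have := harm i iH; rewrite /conn_laplacian.
under eq_bigr do rewrite scalerBr.
rewrite sumrB -scaler_suml => /eqP; rewrite subr_eq0 => /eqP mean.
have [_ _ NZ _] := normN.
have deg_ge0 : 0 <= \sum_(j | adj w i j) w i j by apply: sumr_ge0 => j /ltW.
rewrite -{1}(ger0_norm deg_ge0) -NZ mean.
apply: le_trans (matrix_norm_sum normN _ _) _; apply: ler_sum => j aij.
rewrite NZ ger0_norm; last exact: ltW.
by rewrite orth_invariant_mull //; exact: orth.
Qed.

Theorem proposition4p1 (R : realFieldType) (V : finType) (d : nat)
    (w : V -> V -> R) (sigma : V -> V -> 'M[R]_d)
    (H : {set V}) (f : V -> 'M[R]_d) (N : 'M[R]_d -> R) :
  connection_graph w sigma ->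
  H != set0 -> H != [set: V] ->
  (forall i, i \in H -> conn_laplacian w sigma f i = 0) ->
  matrix_norm N -> orth_invariant N ->
  setmax (vclosure w H) (fun i => N (f i)) = setmax (vboundary w H) (fun i => N (f i)).
Proof.
(* For empty H both sides are the empty maximum 0. *)
move=> [w_sym [_ [_ [w_conn [orth _]]]]] _ HnT harm normN invN.
have subh := harmonic_norm_subharmonic normN invN orth harm.
have max_principle := subharmonic_max_principle w_sym w_conn HnT subh.
set max_bd := setmax (vboundary w H) _.
have le_max_bd j : j \in vboundary w H -> N (f j) <= max_bd.
  exact: le_bigmax_cond.
apply/le_anti/andP; split; apply: bigmax_le => [|i]; try exact: bigmax_ge_id.
  rewrite inE => /orP[/max_principle[b bH le_b] | /le_max_bd//].
  exact: le_trans le_b (le_max_bd b bH).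
by move=> ib; apply: le_bigmax_cond; rewrite inE ib orbT.
Qed.
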